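(* Let $N\ge 2$ and let $\mathcal{X}\in\mathbb{R}^{I_1\times I_2\times\cdots\times I_N}$ be an $N$th-order real tensor. Then there exist positive integers $R_{t,l}$ for all $1\le t<l\le N$, TN cores $\mathcal{G}_k$ ($k=1,\dots,N$) and diagonal matrices $\mathbf{S}_{t,l}\in\mathbb{R}^{R_{t,l}\times R_{t,l}}$ ($1\le t<l\le N$) such that $\mathcal{X}=\mathrm{STN}(\mathcal{G},\mathbf{S})$ (an SVD-inspired TN decomposition of $\mathcal{X}$, as defined in the context) and $$R_{t,l}\le \min(I_t,I_l)\quad\text{for all } 1\le t<l\le N.$$
   Context: Let $\mathbb{K}_N=\{1,\dots,N\}$ and $\mathbb{TL}_N=\{(t,l): 1\le t<l\le N,\ t,l\in\mathbb{N}\}$. Given positive integers $R_{t,l}$ for $(t,l)\in\mathbb{TL}_N$ (with the convention $R_{l,t}$ is not used; all rank indices are written with the smaller index first), an SVD-inspired TN decomposition (SVDinsTN) of $\mathcal{X}\in\mathbb{R}^{I_1\times\cdots\times I_N}$ consists of $N$th-order tensors (TN cores) $\mathcal{G}_k\in\mathbb{R}^{R_{1,k}\times R_{2,k}\times\cdots\times R_{k-1,k}\times I_k\times R_{k,k+1}\times\cdots\times R_{k,N}}$ for $k\in\mathbb{K}_N$ and diagonal matrices $\mathbf{S}_{t,l}\in\mathbb{R}^{R_{t,l}\times R_{t,l}}$ for $(t,l)\in\mathbb{TL}_N$ such that for every index $(i_1,\dots,i_N)$, $$\mathcal{X}(i_1,\dots,i_N)=\sum_{r_{1,2}=1}^{R_{1,2}}\cdots\sum_{r_{N-1,N}=1}^{R_{N-1,N}}\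 \Big(\prod_{(t,l)\in\mathbb{TL}_N}\mathbf{S}_{t,l}(r_{t,l},r_{t,l})\Big)\ \prod_{k=1}^{N}\mathcal{G}_k(r_{1,k},\dots,r_{k-1,k},i_k,r_{k,k+1},\dots,r_{k,N}),$$ where the sum runs over all indices $r_{t,l}\in\{1,\dots,R_{t,l}\}$, $(t,l)\in\mathbb{TL}_N$. This is written $\mathcal{X}=\mathrm{STN}(\mathcal{G},\mathbf{S})$ with $\mathcal{G}=\{\mathcal{G}_k\}_{k\in\mathbb{K}_N}$, $\mathbf{S}=\{\mathbf{S}_{t,l}\}_{(t,l)\in\mathbb{TL}_N}$. The vector $(R_{1,2},R_{1,3},\dots,R_{1,N},R_{2,3},\dots,R_{N-1,N})$ is called the FCTN rank of the decomposition. *)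

From mathcomp Require Import all_boot all_order all_algebra.
From mathcomp Require Import reals.
Set Implicit Arguments. Unset Strict Implicit. Unset Printing Implicit Defensive.
Import Order.TTheory GRing.Theory Num.Theory.
Local Open Scope ring_scope.

(* Modes are indexed by 'I_N = {0,...,N-1} (paper: 1..N). *)

Definition pairs (N : nat) := {p : 'I_N * 'I_N | (p.1 < p.2)%N}.

Definition rassign (N : nat) (Rk : 'I_N -> 'I_N -> nat) :=
  {dffun forall p : pairs N, 'I_(Rk (sval p).1 (sval p).2)}.

(* value r_{t,l} of an assignment (only meaningful for t < l; 0 otherwise) *)
Definition rval (N : nat) (Rk : 'I_N -> 'I_N -> nat) (r : rassign Rk)
    (t l : 'I_N) : nat :=
  (if (t < l)%N as b return (t < l)%N = b -> nat
   then fun h => nat_of_ord (r (exist (fun p : 'I_N * 'I_N => (p.1 < p.2)%N) (t, l) h))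
   else fun _ => 0%N) (erefl _).

(* The multi-index fed to core G_k: position j holds r_{j,k} if j < k,
   i_k if j = k, and r_{k,j} if j > k; i.e. exactly
   (r_{1,k},...,r_{k-1,k}, i_k, r_{k,k+1},...,r_{k,N}). *)
Definition core_index (N : nat) (I : 'I_N -> nat) (Rk : 'I_N -> 'I_N -> nat)
    (i : forall k : 'I_N, 'I_(I k)) (r : rassign Rk) (k : 'I_N) : 'I_N -> nat :=
  fun j => if (j < k)%N then rval r j k
           else if j == k then nat_of_ord (i k) else rval r k j.

(* A TN core G_k is an N-th order tensor, given as a function of its
   N (natural-number) indices; only the entries with index at position j
   below R_{j,k} (j<k), I_k (j=k), R_{k,j} (j>k) are ever used. *)
Definition core (R : Type) (N : nat) := ('I_N -> nat) -> R.

Definition STN (R : pzRingType) (N : nat) (I : 'I_N -> nat)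
    (Rk : 'I_N -> 'I_N -> nat) (G : 'I_N -> core R N)
    (S : forall t l : 'I_N, 'M[R]_(Rk t l)) (i : forall k : 'I_N, 'I_(I k)) : R :=
  \sum_(r : rassign Rk)
     (\prod_(p : pairs N) S (sval p).1 (sval p).2 (r p) (r p))
     * \prod_(k < N) G k (core_index i r k).

From mathcomp Require Import all_boot all_order all_algebra.
From mathcomp Require Import reals.
From Stdlib Require Import FunctionalExtensionality.
Import Order.TTheory GRing.Theory Num.Theory.
Local Open Scope ring_scope.

(* Proof idea: a star-shaped network.  Pick a "hub" mode m of maximal
   dimension I_m.  Give every edge (m,l) rank I_l, every other edge rank 1,
   and take all diagonal factors S_{t,l} to be identity matrices.  The hub
   core G_m is X itself, read off from the indices on the edges at m; every
   other core G_k is the copy tensor G_k(..) = [index on edge {k,m} = i_k].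
   In the sum defining STN(G,S)(i) the copy tensors vanish unless the rank
   assignment r is the unique one carrying i_k on each edge {k,m}, and for
   that r the hub core returns X(i). *)

Set Implicit Arguments.
Unset Strict Implicit.
Unset Printing Implicit Defensive.

Definition edge (N : nat) (t l : 'I_N) (h : (t < l)%N) : pairs N :=
  exist (fun p : 'I_N * 'I_N => (p.1 < p.2)%N) (t, l) h.

Section CoreIndex.
Context {N : nat} {I : 'I_N -> nat} {Rk : 'I_N -> 'I_N -> nat}.
Context {i : forall k : 'I_N, 'I_(I k)} {r : rassign Rk}.

Lemma rvalE (t l : 'I_N) (h : (t < l)%N) : rval r t l = r (edge h).
Proof.
rewrite /rval; move: (erefl (t < l)%N); rewrite {2 3}h => e.
by rewrite (bool_irrelevance e h).
Qed.

Lemma core_index_self (k : 'I_N) : core_index i r k k = i k.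
Proof. by rewrite /core_index ltnn eqxx. Qed.

Lemma core_index_lo (t l : 'I_N) (h : (t < l)%N) :
  core_index i r l t = r (edge h).
Proof. by rewrite /core_index h rvalE. Qed.

Lemma core_index_hi (t l : 'I_N) (h : (t < l)%N) :
  core_index i r t l = r (edge h).
Proof.
rewrite /core_index ltnNge (ltnW h) /= rvalE.
by have -> : (l == t) = false by apply/eqP=> e; rewrite e ltnn in h.
Qed.

Lemma core_index_swap (k m : 'I_N) :
  k != m -> core_index i r m k = core_index i r k m.
Proof.
move=> km; case: (ltngtP k m) => [lt_km | lt_mk | e].
- by rewrite (core_index_lo lt_km) (core_index_hi lt_km).
- by rewrite (core_index_lo lt_mk) (core_index_hi lt_mk).
- by rewrite (val_inj e) eqxx in km.
Qed.

End CoreIndex.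

Section Star.
Variables (R : comPzRingType) (N : nat) (I : 'I_N -> nat).
Hypothesis I_gt0 : forall k : 'I_N, (0 < I k)%N.
Variables (m : 'I_N) (X : (forall k : 'I_N, 'I_(I k)) -> R).

Definition star_rank (t l : 'I_N) : nat :=
  if t == m then I l else if l == m then I t else 1%N.

Lemma star_rank_gt0 (t l : 'I_N) : (0 < star_rank t l)%N.
Proof. by rewrite /star_rank; case: ifP => _ //; case: ifP. Qed.

Lemma star_rank_le_min (t l : 'I_N) :
  (forall k, I k <= I m)%N -> (star_rank t l <= minn (I t) (I l))%N.
Proof.
move=> max_m; rewrite /star_rank leq_min.
case: eqP => [->|_]; first by rewrite max_m leqnn.
case: eqP => [->|_]; first by rewrite max_m leqnn.
by rewrite !I_gt0.
Qed.

Definition star_core (k : 'I_N) : core R N :=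
  if k == m then fun f => X (fun j => insubd (Ordinal (I_gt0 j)) (f j))
  else fun f => (f m == f k)%:R.

Definition star_weights (t l : 'I_N) : 'M[R]_(star_rank t l) := 1%:M.

Variable i : forall k : 'I_N, 'I_(I k).

Definition star_val (t l : 'I_N) : nat :=
  if t == m then nat_of_ord (i l) else if l == m then nat_of_ord (i t) else 0%N.

Lemma star_val_lt (t l : 'I_N) : (star_val t l < star_rank t l)%N.
Proof.
by rewrite /star_val /star_rank; case: ifP => _; [|case: ifP].
Qed.

Definition star_assign : rassign star_rank :=
  [ffun p => Ordinal (star_val_lt (sval p).1 (sval p).2)].

(* r is consistent when every copy tensor G_k (k <> m) is nonzero. *)
Definition consistent (r : rassign star_rank) : bool :=
  [forall k, (k != m) ==> (core_index i r k m == core_index i r k k)].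

Lemma consistent_star_assign : consistent star_assign.
Proof.
apply/forallP=> k; apply/implyP=> km; rewrite core_index_self.
case: (ltngtP k m) => [lt_km | lt_mk | e]; last by rewrite (val_inj e) eqxx in km.
- by rewrite (core_index_hi lt_km) ffunE /= /star_val (negbTE km) eqxx.
- by rewrite (core_index_lo lt_mk) ffunE /= /star_val eqxx.
Qed.

Lemma consistent_eq (r : rassign star_rank) : consistent r -> r = star_assign.
Proof.
move=> /forallP cons; apply/ffunP=> -[[t l] /= h]; apply: val_inj.
rewrite ffunE /= /star_val /=.
case: (eqVneq t m) => [tm | tm].
  have lm : l != m by rewrite -tm; apply/eqP=> e; rewrite e ltnn in h.
  have := implyP (cons l) lm; rewrite core_index_self -tm core_index_lo.
  by move/eqP.
case: (eqVneq l m) => [lm | lm].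
  have := implyP (cons t) tm.
  by rewrite core_index_self -lm core_index_hi => /eqP.
have : (r (edge h) < star_rank t l)%N by exact: ltn_ord.
move: (nat_of_ord _) => x; rewrite /star_rank (negbTE tm) (negbTE lm).
by rewrite ltnS leqn0 => /eqP.
Qed.

Lemma consistentP (r : rassign star_rank) : consistent r = (r == star_assign).
Proof.
apply/idP/eqP => [/consistent_eq // | ->]; exact: consistent_star_assign.
Qed.

Lemma hub_index (r : rassign star_rank) :
  consistent r ->
  (fun j => insubd (Ordinal (I_gt0 j)) (core_index i r m j)) = i.
Proof.
move=> /forallP cons; apply: functional_extensionality_dep => j.
have -> : core_index i r m j = i j.
  case: (eqVneq j m) => [->|jm]; first by rewrite core_index_self.
  have /eqP agree := implyP (cons j) jm.
  by rewrite core_index_swap // agree core_index_self.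
by apply: val_inj; rewrite insubdK // unfold_in /= ltn_ord.
Qed.

Lemma star_term (r : rassign star_rank) :
  (\prod_(p : pairs N) star_weights (sval p).1 (sval p).2 (r p) (r p))
    * \prod_(k < N) star_core k (core_index i r k)
  = (consistent r)%:R * X i.
Proof.
rewrite big1 ?mul1r; last by move=> p _; rewrite mxE eqxx.
rewrite (bigD1 m) //= /star_core eqxx.
case cons: (consistent r).
  rewrite hub_index // big1 ?mulr1 ?mul1r // => k km.
  by rewrite (negbTE km) (implyP (forallP cons k) km).
move/negbT: cons; rewrite negb_forall => /existsP [k].
rewrite negb_imply => /andP [km nk].
by rewrite (bigD1 k) //= (negbTE km) (negbTE nk) mul0r mulr0 mul0r.
Qed.

Lemma star_STN : X i = STN star_core star_weights i.
Proof.
rewrite /STN (eq_bigr _ (fun r _ => star_term r)) (bigD1 star_assign) //=.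
rewrite consistent_star_assign mul1r big1 ?addr0 // => r /negbTE rs.
by rewrite consistentP rs mul0r.
Qed.

End Star.

Lemma exists_max_mode (N : nat) (I : 'I_N -> nat) :
  (0 < N)%N -> exists m : 'I_N, forall k, (I k <= I m)%N.
Proof.
case: N I => [|n] I // _.
by case: (@arg_maxnP _ (@ord0 n) xpredT I) => // j _ max_j; exists j => k; apply: max_j.
Qed.

Unset Implicit Arguments.
Set Strict Implicit.

Theorem theorem1 (R : realType) (N : nat) (I : 'I_N -> nat)
    (X : (forall k : 'I_N, 'I_(I k)) -> R) :
  (2 <= N)%N -> (forall k : 'I_N, (0 < I k)%N) ->
  exists Rk : 'I_N -> 'I_N -> nat,
    (forall t l : 'I_N, (t < l)%N -> (0 < Rk t l)%N /\ (Rk t l <= minn (I t) (I l))%N) /\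
    exists (G : 'I_N -> core R N) (S : forall t l : 'I_N, 'M[R]_(Rk t l)),
      (forall t l : 'I_N, (t < l)%N -> is_diag_mx (S t l)) /\
      (forall i : forall k : 'I_N, 'I_(I k), X i = STN G S i).
Proof.
move=> N_ge2 I_gt0.
have [m max_m] := exists_max_mode I (ltnW N_ge2).
exists (star_rank I m); split.
  by move=> t l _; split; [exact: star_rank_gt0 | exact: star_rank_le_min].
exists (star_core I_gt0 m X), (star_weights R I m); split.
  by move=> t l _; exact: scalar_mx_is_diag.
exact: star_STN.
Qed.
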